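(* Let $(\mathcal{M},\delta)$ be a finite metric space and $k$ an integer with $2\le k<|\mathcal{M}|$. Let $\alpha=\min\{GR_P : P\subset\mathcal{M},\ |P|=k\}$ be the optimal gap ratio, and let $S_k$ be the output of the farthest-point-insertion procedure: choose $q_1,q_2\in\mathcal{M}$ with $\delta(q_1,q_2)=\operatorname{diam}(\mathcal{M})$, set $S_2=\{q_1,q_2\}$, and for $i=2,\dots,k-1$ let $q_{i+1}$ be any point of $\mathcal{M}$ maximizing $\delta(\cdot,S_i)$ and set $S_{i+1}=S_i\cup\{q_{i+1}\}$. Then $GR_{S_k}\le\rho\,\alpha$, where: (i) if $\alpha\ge1$, $\rho=\frac{2}{\alpha}\le 2$; (ii) if $\frac23\le\alpha<1$, $\rho=\frac{2}{\alpha}\le3$; (iii) if $\alpha<\frac23$, $\rho=\frac{4}{2-\alpha}<3$.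
   Context: For a metric space $(\mathcal{M},\delta)$ and a finite nonempty set $S\subset\mathcal{M}$, $\delta(x,S)=\min_{s\in S}\delta(x,s)$ and $R_S=\sup_{x\in\mathcal{M}}\delta(x,S)$; if $|S|\ge2$, $r_S=\min_{p,q\in S,\,p\ne q}\delta(p,q)/2$ and the gap ratio is $GR_S=R_S/r_S$. *)

From mathcomp Require Import all_boot all_order all_algebra.
Set Implicit Arguments. Unset Strict Implicit. Unset Printing Implicit Defensive.
Import Order.TTheory GRing.Theory Num.Theory.
Local Open Scope ring_scope.

Section Defs.
Variables (R : realFieldType) (T : finType).

Definition is_metric (d : T -> T -> R) : Prop :=
  [/\ forall x y, 0 <= d x y,
      forall x y, d x y = 0 <-> x = y,
      forall x y, d x y = d y x &
      forall x y z, d x z <= d x y + d y z].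

Definition diam (d : T -> T -> R) : R :=
  \big[Num.max/0]_(x : T) \big[Num.max/0]_(y : T) d x y.

(* delta(x,S) = min_{s in S} d x s.  The neutral element diam d is an upper
   bound of all distances, so for nonempty S this is exactly the minimum. *)
Definition distS (d : T -> T -> R) (x : T) (S : {set T}) : R :=
  \big[Num.min/diam d]_(s in S) d x s.

Definition covR (d : T -> T -> R) (S : {set T}) : R :=
  \big[Num.max/0]_(x : T) distS d x S.

(* r_S = min_{p != q in S} d p q / 2   (meaningful for #|S| >= 2) *)
Definition packr (d : T -> T -> R) (S : {set T}) : R :=
  (\big[Num.min/diam d]_(p in S) \big[Num.min/diam d]_(q in S | q != p) d p q) / 2.

Definition GR (d : T -> T -> R) (S : {set T}) : R := covR d S / packr d S.

(* S_i = {q_0, ..., q_{i-1}} (0-indexed version of the paper's S_i) *)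
Definition prefix_set (q : nat -> T) (i : nat) : {set T} :=
  [set q (nat_of_ord j) | j : 'I_i].

Definition fpi_run (d : T -> T -> R) (k : nat) (q : nat -> T) : Prop :=
  (forall x y, d x y <= d (q 0%N) (q 1%N)) /\
  (forall i, (2 <= i < k)%N -> forall x,
      distS d x (prefix_set q i) <= distS d (q i) (prefix_set q i)).

End Defs.

From mathcomp Require Import all_boot all_order all_algebra.
From mathcomp Require Import ring lra.
Import Order.TTheory GRing.Theory Num.Theory.
Local Open Scope ring_scope.

(* Farthest-point insertion alone gives GR <= 2, which settles alpha >= 2/3:
   when q_j was inserted, every point was within delta(q_j, S_j) <= delta(q_i, q_j)
   of S_j (i < j), so R_{S_k} and every delta(y, S_{k-1}) are at most 2 r_{S_k}.
   For alpha < 2/3 take P with GR_P = alpha, R_P = a, r_P = b, so 3a < 2b.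
   Sending each q_i to its nearest point of P is then a bijection S_k -> P:
   otherwise two q_i share a centre (so R_{S_k} <= 2a) while some centre p is
   hit by no q_i (so R_{S_k} >= delta(p, S_k) >= 2b - a), contradicting 3a < 2b.
   Bijectivity gives R_{S_k} <= 2a, and the centre of q_{k-1} lies at distance
   >= 2b - a from S_{k-1}, whence 2 r_{S_k} >= 2b - a; dividing,
   GR_{S_k} <= 4a / (2b - a) = 4 alpha / (2 - alpha). *)

Lemma mem_prefix {T : finType} (q : nat -> T) i m : (i < m)%N -> q i \in prefix_set q m.
Proof. by move=> im; apply/imsetP; exists (Ordinal im). Qed.

Lemma prefixP {T : finType} (q : nat -> T) m x :
  x \in prefix_set q m -> exists2 i, (i < m)%N & x = q i.
Proof. by move=> /imsetP[i _ ->]; exists (nat_of_ord i). Qed.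

Lemma prefix_subset {T : finType} (q : nat -> T) m n :
  (m <= n)%N -> prefix_set q m \subset prefix_set q n.
Proof.
move=> mn; apply/subsetP => _ /prefixP[i im ->].
by apply: mem_prefix; exact: leq_trans im mn.
Qed.

Section MetricSpace.
Context {R : realFieldType} {T : finType} {d : T -> T -> R}.
Hypothesis d_metric : is_metric d.

Let d_ge0 x y : 0 <= d x y. Proof. by case: d_metric. Qed.
Let dC x y : d x y = d y x. Proof. by case: d_metric. Qed.
Let d_triangle x y z : d x z <= d x y + d y z. Proof. by case: d_metric. Qed.

Lemma dist_le_diam x y : d x y <= diam d.
Proof. by apply: (bigmax_sup x) => //; apply: (bigmax_sup y). Qed.

Lemma diam_ge0 : 0 <= diam d.
Proof. exact: bigmax_ge_id. Qed.

Lemma distS_le_dist x s (S : {set T}) : s \in S -> distS d x S <= d x s.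
Proof. by move=> sS; apply: (bigmin_le_cond _ (fun s => d x s)). Qed.

Lemma distS_le_diam x (S : {set T}) : distS d x S <= diam d.
Proof. exact: bigmin_le_id. Qed.

Lemma le_distS x (S : {set T}) c :
  c <= diam d -> (forall s, s \in S -> c <= d x s) -> c <= distS d x S.
Proof. by move=> c_diam le_c; apply: le_bigmin. Qed.

Lemma distS_subset x (A B : {set T}) : A \subset B -> distS d x B <= distS d x A.
Proof.
move=> /subsetP AB; apply: le_bigmin => [|s /AB]; first exact: distS_le_diam.
exact: distS_le_dist.
Qed.

Lemma distS_le_covR x (S : {set T}) : distS d x S <= covR d S.
Proof. exact: (bigmax_sup x). Qed.

Lemma covR_ge0 (S : {set T}) : 0 <= covR d S.
Proof. exact: bigmax_ge_id. Qed.

Lemma covR_le (S : {set T}) c : 0 <= c -> (forall x, distS d x S <= c) -> covR d S <= c.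
Proof. by move=> c_ge0 le_c; apply: bigmax_le. Qed.

Lemma packr_le_dist (S : {set T}) p p' :
  p \in S -> p' \in S -> p' != p -> 2 * packr d S <= d p p'.
Proof.
move=> pS p'S p'p; rewrite /packr mulrC divfK ?pnatr_eq0 //.
by apply: (bigmin_inf p) => //; apply: (bigmin_inf p') => //; rewrite p'S.
Qed.

Lemma le_packr (S : {set T}) c :
  c <= diam d -> (forall p p', p \in S -> p' \in S -> p' != p -> c <= d p p') ->
  c <= 2 * packr d S.
Proof.
move=> c_diam le_c; rewrite /packr mulrC divfK ?pnatr_eq0 //.
apply: le_bigmin => // p pS; apply: le_bigmin => // p' /andP[p'S p'p].
exact: le_c.
Qed.

Lemma packr_le_diam (S : {set T}) : 2 * packr d S <= diam d.
Proof. by rewrite /packr mulrC divfK ?pnatr_eq0 //; exact: bigmin_le_id. Qed.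

Lemma packr_ge0 (S : {set T}) : 0 <= packr d S.
Proof.
have : 0 <= 2 * packr d S by apply: le_packr => *; [exact: diam_ge0 | exact: d_ge0].
by rewrite pmulr_rge0.
Qed.

Lemma packr_gt0 (S : {set T}) : (2 <= #|S|)%N -> 0 < packr d S.
Proof.
move=> S2; have [p pS] : exists p, p \in S by apply/card_gt0P; exact: leq_trans S2.
have [p' p'Sp] : exists p', p' \in S :\ p.
  by apply/card_gt0P; move: S2; rewrite (cardsD1 p S) pS.
have d_gt0 x y : x != y -> 0 < d x y.
  move=> xy; rewrite lt_def d_ge0 andbT; apply: contra xy => /eqP.
  by case: d_metric => _ d0 _ _ /d0 ->.
have diam_gt0 : 0 < diam d.
  move: p'Sp; rewrite !inE => /andP[p'p _].
  exact: lt_le_trans (d_gt0 _ _ p'p) (dist_le_diam _ _).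
rewrite /packr divr_gt0 // lt_bigmin // => x _; rewrite lt_bigmin // => y /andP[_ yx].
by apply: d_gt0; rewrite eq_sym.
Qed.

Lemma GR_le (S : {set T}) c : 0 <= c -> covR d S <= c * packr d S -> GR d S <= c.
Proof.
move=> c_ge0 covR_le_c; rewrite /GR.
have [->|packr_neq0] := eqVneq (packr d S) 0; first by rewrite invr0 mulr0.
have packr_gt0 : 0 < packr d S by rewrite lt_def packr_neq0 packr_ge0.
by rewrite ler_pdivrMr.
Qed.

Section NearestCentre.
Variables (P : {set T}) (p0 : T).
Hypothesis p0P : p0 \in P.

Definition nearest x : T := [arg min_(s < p0 in P) d x s]%O.

Lemma nearest_in x : nearest x \in P.
Proof. by rewrite /nearest; case: arg_minP. Qed.

Lemma dist_nearest_le x : d x (nearest x) <= covR d P.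
Proof.
apply: le_trans (distS_le_covR x P); rewrite /nearest.
by case: arg_minP => // s _ s_min; apply: le_distS => //; exact: dist_le_diam.
Qed.

Lemma nearest_far x p :
  p \in P -> nearest x != p -> 2 * packr d P - covR d P <= d p x.
Proof.
move=> pP nearest_neq; rewrite lerBlDr.
apply: le_trans (packr_le_dist _ _ _ pP (nearest_in x) nearest_neq) _.
by apply: le_trans (d_triangle p x (nearest x)) _; rewrite lerD2l dist_nearest_le.
Qed.

End NearestCentre.

Lemma le_packr_prefix (q : nat -> T) m c :
  c <= diam d -> (forall i j, (i < j < m)%N -> c <= d (q i) (q j)) ->
  c <= 2 * packr d (prefix_set q m).
Proof.
move=> c_diam le_c; apply: le_packr => // _ _ /prefixP[i im ->] /prefixP[j jm ->] qji.
have [ij|ji|ij] := ltngtP i j.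
- by apply: le_c; rewrite ij.
- by rewrite dC; apply: le_c; rewrite ji.
- by rewrite ij eqxx in qji.
Qed.

Section FarthestPointInsertion.
Context {k : nat} {q : nat -> T}.
Hypothesis run : fpi_run d k q.

Lemma fpi_distS_le_dist y i j :
  (i < j < k)%N -> distS d y (prefix_set q j) <= d (q i) (q j).
Proof.
have [q01_diam q_farthest] := run; case/andP=> ij jk.
have [j2|j_lt2] := leqP 2 j.
  apply: le_trans (q_farthest j _ y) _; first by rewrite j2.
  by rewrite dC; apply: distS_le_dist; exact: mem_prefix.
have [-> ->] : i = 0%N /\ j = 1%N by case: j ij j_lt2 {jk} => [|[|]] //; case: i.
by apply: le_trans (q01_diam y (q 0%N)); apply: distS_le_dist; exact: mem_prefix.
Qed.

Lemma fpi_distS_le_packr y : distS d y (prefix_set q k.-1) <= 2 * packr d (prefix_set q k).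
Proof.
apply: le_packr_prefix => [|i j /andP[ij jk]]; first exact: distS_le_diam.
have ijk : (i < j < k)%N by rewrite ij.
apply: le_trans (fpi_distS_le_dist y _ _ ijk).
by apply: distS_subset; apply: prefix_subset; rewrite -ltnS (ltn_predK jk).
Qed.

Lemma fpi_covR_le_dist i j :
  (i < k)%N -> (j < k)%N -> i != j -> covR d (prefix_set q k) <= d (q i) (q j).
Proof.
wlog ij : i j / (i < j)%N => [wlog_ij ik jk ij_neq|_ jk _].
  case: (ltngtP i j) => [ij|ji|ij_eq].
  - exact: wlog_ij.
  - by rewrite dC; apply: wlog_ij; rewrite // eq_sym.
  - by rewrite ij_eq eqxx in ij_neq.
apply: covR_le => [|y]; first exact: d_ge0.
have ijk : (i < j < k)%N by rewrite ij.
apply: le_trans (fpi_distS_le_dist y _ _ ijk).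
by apply: distS_subset; apply: prefix_subset; exact: ltnW.
Qed.

Lemma fpi_covR_le_packr : covR d (prefix_set q k) <= 2 * packr d (prefix_set q k).
Proof.
apply: le_packr_prefix => [|i j /andP[ij jk]].
  by apply: covR_le => [|y]; [exact: diam_ge0 | exact: distS_le_diam].
by apply: fpi_covR_le_dist; rewrite ?(ltn_trans ij) // ltn_eqF.
Qed.

Lemma fpi_GR_le2 : GR d (prefix_set q k) <= 2.
Proof. exact: GR_le fpi_covR_le_packr. Qed.

Section SmallGap.
Variables (P : {set T}) (p0 : T).
Hypotheses (p0P : p0 \in P) (card_P : #|P| = k).
Hypothesis small_gap : 3 * covR d P < 2 * packr d P.

Let centre (i : 'I_k) : T := nearest P p0 (q i).
Let centres : {set T} := centre @: setT.

Lemma uncovered_centre_le_covR p :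
  p \in P -> p \notin centres -> 2 * packr d P - covR d P <= covR d (prefix_set q k).
Proof.
move=> pP p_uncovered; apply: le_trans (distS_le_covR p _).
apply: le_distS => [|_ /prefixP[i ik ->]].
  by rewrite lerBlDr; apply: le_trans (packr_le_diam P) _; rewrite lerDl covR_ge0.
apply: (nearest_far _ _ p0P) => //; apply: contraNneq p_uncovered => <-.
by apply/imsetP; exists (Ordinal ik).
Qed.

Lemma shared_centre_covR_le i j :
  i != j -> centre i = centre j -> covR d (prefix_set q k) <= 2 * covR d P.
Proof.
move=> ij centre_ij; apply: le_trans (fpi_covR_le_dist _ _ (ltn_ord i) (ltn_ord j) ij) _.
apply: le_trans (d_triangle _ (centre i) _) _; rewrite mulr2n mulrDl mul1r.
by apply: lerD; last rewrite centre_ij dC; exact: dist_nearest_le.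
Qed.

Lemma centre_injective : injective centre.
Proof.
apply/injectiveP; apply/negPn/negP => /injectivePn[i [j ij centre_ij]].
have /subsetPn[p pP p_uncovered] : ~~ (P \subset centres).
  apply: contraL ij => /subset_leq_card P_le; rewrite negbK; apply/eqP.
  have /imset_injP centre_inj : #|centres| == #|[set: 'I_k]|.
    by rewrite eqn_leq leq_imset_card cardsT card_ord -card_P P_le.
  exact: centre_inj (in_setT i) (in_setT j) centre_ij.
have lower := uncovered_centre_le_covR p pP p_uncovered.
have upper := shared_centre_covR_le i j ij centre_ij.
by move: small_gap (covR_ge0 P); lra.
Qed.

Lemma centres_cover_P : P \subset centres.
Proof.
have centres_sub : centres \subset P by apply/subsetP => _ /imsetP[i _ ->]; exact: nearest_in.
have /eqP -> // : centres == P.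
rewrite eqEcard centres_sub card_imset; last exact: centre_injective.
by rewrite cardsT card_ord card_P leqnn.
Qed.

Lemma fpi_covR_le_2covR : covR d (prefix_set q k) <= 2 * covR d P.
Proof.
apply: covR_le => [|x]; first by rewrite mulr_ge0 ?covR_ge0.
have /imsetP[i _ centre_x] := subsetP centres_cover_P _ (nearest_in _ _ p0P x).
apply: le_trans (distS_le_dist x _ _ (mem_prefix q _ _ (ltn_ord i))) _.
apply: le_trans (d_triangle _ (nearest P p0 x) _) _; rewrite mulr2n mulrDl mul1r.
by apply: lerD; last rewrite centre_x dC; exact: dist_nearest_le.
Qed.

Lemma fpi_packr_ge : 2 * packr d P - covR d P <= 2 * packr d (prefix_set q k).
Proof.
have k_gt0 : (0 < k)%N by rewrite -card_P; apply/card_gt0P; exists p0.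
have last_lt : (k.-1 < k)%N by rewrite prednK.
set top := Ordinal last_lt.
apply: le_trans (fpi_distS_le_packr (centre top)).
apply: le_distS => [|_ /prefixP[j jk ->]].
  by rewrite lerBlDr; apply: le_trans (packr_le_diam P) _; rewrite lerDl covR_ge0.
apply: (nearest_far _ _ p0P); first exact: nearest_in.
have jk' : (j < k)%N by exact: ltn_trans jk last_lt.
apply/eqP => /(centre_injective (Ordinal jk') top)/(congr1 val) /= jk_eq.
by rewrite jk_eq ltnn in jk.
Qed.

End SmallGap.

Lemma fpi_GR_le_small_gap (P : {set T}) :
  #|P| = k -> (2 <= k)%N -> GR d P < 2 / 3 ->
  GR d (prefix_set q k) <= 4 / (2 - GR d P) * GR d P.
Proof.
move=> card_P k2 GR_small.
have [p0 p0P] : exists p0, p0 \in P by apply/card_gt0P; rewrite card_P; exact: ltnW.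
have b_gt0 : 0 < packr d P by apply: packr_gt0; rewrite card_P.
have a_ge0 := covR_ge0 P.
have small_gap : 3 * covR d P < 2 * packr d P.
  by move: GR_small; rewrite /GR ltr_pdivrMr //; lra.
have cover := fpi_covR_le_2covR _ _ p0P card_P small_gap.
have packing := fpi_packr_ge _ _ p0P card_P small_gap.
have r_ge0 := packr_ge0 (prefix_set q k).
rewrite [GR d P]/GR; set a := covR d P in a_ge0 small_gap cover packing *.
set b := packr d P in b_gt0 small_gap packing *.
have -> : 4 / (2 - a / b) * (a / b) = 4 * a / (2 * b - a).
  by field; rewrite !gt_eqF //; lra.
apply: GR_le; first by rewrite divr_ge0 //; lra.
rewrite mulrAC ler_pdivlMr; last by lra.
by nra.
Qed.

End FarthestPointInsertion.

End MetricSpace.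

Theorem theorem8 (R : realFieldType) (T : finType) (d : T -> T -> R)
  (k : nat) (alpha : R) (q : nat -> T) :
  is_metric d ->
  (2 <= k < #|T|)%N ->
  (* alpha is the minimum of GR_P over all P with |P| = k *)
  (exists P : {set T}, #|P| = k /\ GR d P = alpha) ->
  (forall P : {set T}, #|P| = k -> alpha <= GR d P) ->
  fpi_run d k q ->
  [/\ 1 <= alpha -> GR d (prefix_set q k) <= (2 / alpha) * alpha /\ 2 / alpha <= 2,
      2 / 3 <= alpha < 1 ->
        GR d (prefix_set q k) <= (2 / alpha) * alpha /\ 2 / alpha <= 3 &
      alpha < 2 / 3 ->
        GR d (prefix_set q k) <= (4 / (2 - alpha)) * alpha /\ 4 / (2 - alpha) < 3].
Proof.
move=> d_metric /andP[k2 _] [P [card_P <-]] _ run.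
have GR_le_2 (alpha_gt0 : 0 < GR d P) : GR d (prefix_set q k) <= 2 / GR d P * GR d P.
  by rewrite divfK ?gt_eqF //; exact: (fpi_GR_le2 d_metric run).
split=> [alpha_ge1 | /andP[alpha_ge alpha_lt1] | alpha_small].
- by split; [apply: GR_le_2; lra | rewrite ler_pdivrMr; lra].
- by split; [apply: GR_le_2; lra | rewrite ler_pdivrMr; lra].
split; first exact: (fpi_GR_le_small_gap d_metric run P card_P k2 alpha_small).
by rewrite ltr_pdivrMr; lra.
Qed.
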